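(* Let $\hookrightarrow$ and $\simeq$ be as in the context. Then: (1) $\hookrightarrow$ is confluent; (2) for all terms $M, N, N'$, if $M \simeq N$ and $N \hookrightarrow N'$, then there is a term $M'$ with $M \hookrightarrow M'$ and $M' \simeq N'$; (3) for all terms $M, N$, if $M \equiv N$ then there are terms $M', N'$ with $M \hookrightarrow^* M'$, $N \hookrightarrow^* N'$ and $M' \simeq N'$.
   Context: Terms are given by $M, N, A, B ::= x \mid c \mid M\,N \mid \lambda x : A.\,M \mid \Pi x : A.\,B \mid \mathbf{Type} \mid \mathbf{Kind}$, with $x$ ranging over variables and $c$ over constants. The constants include $Level, \mathtt{z}, \mathtt{s}, \sqcup$ (written infix), $U, El, u, \pi$. Level expressions are terms generated by $l ::= i \mid \mathtt{z} \mid \mathtt{s}\,l \mid l \sqcup l'$ where $i$ ranges over a distinguished infinite set $\mathcal{I}$ of level variables; level variables may only be substituted by level expressions. Fix a signature containing definitions $c : A := M$. The one-step reduction $\hookrightarrow$ is the closure under contexts (and, for the rewrite rules, substitutions) of: $\beta$-reduction $(\lambda x : A.\,M)\,N \hookrightarrow M\{N/x\}$; the rewrite rules $El~i'~(u~i) \hookrightarrow U~i$ and $El~i'~(\pi~i_A~i_B~A~B) \hookrightarrow \Pi x : El~i_A~A.\, El~i_B~(B~x)$; and $\delta$-rules $c \hookrightarrow M$ for each definition $c : A := M$ in the signature. $\hookrightarrow^*$ is its reflexive-transitive closure. The relation $\simeq$ on terms is the smallest congruence (reflexive, symmetric, transitive, closed under all term constructors and under substitution, with level variables instantiated only by levels)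 containing the level equations $i_1 \sqcup (i_2 \sqcup i_3) \approx (i_1 \sqcup i_2) \sqcup i_3$, $i_1 \sqcup i_2 \approx i_2 \sqcup i_1$, $\mathtt{s}\,(i_1 \sqcup i_2) \approx \mathtt{s}\,i_1 \sqcup \mathtt{s}\,i_2$, $i \sqcup \mathtt{s}\,i \approx \mathtt{s}\,i$, $i \sqcup \mathtt{z} \approx i$, $i \sqcup i \approx i$. $\equiv$ is the reflexive, symmetric, transitive closure of $\hookrightarrow \cup \simeq$. *)

(* Untyped terms of the lambda-Pi calculus modulo rewriting
   with universe levels, de Bruijn representation with TWO sorts of
   variables: ordinary variables and level variables (the set I). *)
From Stdlib Require Import Arith Relations.

(* Constants: the built-in ones of the paper, plus other constants CDef n
   (which may or may not carry a definition in the signature). *)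
Inductive const : Type :=
  | CLevel | Cz | Cs | Cmax | CU | CEl | Cu | Cpi
  | CDef (n : nat).

Inductive vkind : Type := Ord | Lev.

Definition vkind_eqb (k k' : vkind) : bool :=
  match k, k' with
  | Ord, Ord => true
  | Lev, Lev => true
  | _, _ => false
  end.

Inductive term : Type :=
  | Var (n : nat)
  | LVar (n : nat)
  | Const (c : const)
  | App (M N : term)
  | Lam (k : vkind) (A M : term)   (* binds index 0 of sort k in M *)
  | Pi (k : vkind) (A B : term)    (* binds index 0 of sort k in B *)
  | TypeS
  | KindS.

Definition bump (k k' : vkind) (d : nat) : nat :=
  if vkind_eqb k k' then S d else d.

Fixpoint lift (k : vkind) (d : nat) (M : term) : term :=
  match M with
  | Var n => match k with
             | Ord => if Nat.ltb n d then Var n else Var (S n)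
             | Lev => Var n
             end
  | LVar n => match k with
              | Lev => if Nat.ltb n d then LVar n else LVar (S n)
              | Ord => LVar n
              end
  | Const c => Const c
  | App P Q => App (lift k d P) (lift k d Q)
  | Lam k' A P => Lam k' (lift k d A) (lift k (bump k k' d) P)
  | Pi k' A B => Pi k' (lift k d A) (lift k (bump k k' d) B)
  | TypeS => TypeS
  | KindS => KindS
  end.

Fixpoint subst (k : vkind) (d : nat) (N : term) (M : term) : term :=
  match M with
  | Var n => match k with
             | Ord => if Nat.ltb n d then Var n
                      else if Nat.eqb n d then N else Var (pred n)
             | Lev => Var n
             end
  | LVar n => match k with
              | Lev => if Nat.ltb n d then LVar n
                       else if Nat.eqb n d then N else LVar (pred n)
              | Ord => LVar n
              end
  | Const c => Const c
  | App P Q => App (subst k d N P) (subst k d N Q)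
  | Lam k' A P => Lam k' (subst k d N A) (subst k (bump k k' d) (lift k' 0 N) P)
  | Pi k' A B => Pi k' (subst k d N A) (subst k (bump k k' d) (lift k' 0 N) B)
  | TypeS => TypeS
  | KindS => KindS
  end.

Fixpoint closed_at (o l : nat) (M : term) : bool :=
  match M with
  | Var n => Nat.ltb n o
  | LVar n => Nat.ltb n l
  | Const _ => true
  | App P Q => closed_at o l P && closed_at o l Q
  | Lam Ord A P => closed_at o l A && closed_at (S o) l P
  | Lam Lev A P => closed_at o l A && closed_at o (S l) P
  | Pi Ord A B => closed_at o l A && closed_at (S o) l B
  | Pi Lev A B => closed_at o l A && closed_at o (S l) B
  | TypeS => true
  | KindS => true
  end.

Definition closed (M : term) : Prop := closed_at 0 0 M = true.

Definition tz : term := Const Cz.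
Definition ts (l : term) : term := App (Const Cs) l.
Definition tmax (l l' : term) : term := App (App (Const Cmax) l) l'.
Definition tU (l : term) : term := App (Const CU) l.
Definition tEl (l A : term) : term := App (App (Const CEl) l) A.
Definition tu (l : term) : term := App (Const Cu) l.
Definition tpi (lA lB A B : term) : term :=
  App (App (App (App (Const Cpi) lA) lB) A) B.

Inductive is_level : term -> Prop :=
  | lv_var i : is_level (LVar i)
  | lv_z : is_level tz
  | lv_s l : is_level l -> is_level (ts l)
  | lv_max l l' : is_level l -> is_level l' -> is_level (tmax l l').

(* A signature: CDef n has definition  CDef n : A := M  iff sig n = Some (A, M). *)
Definition signature := nat -> option (term * term).

(* One-step reduction  ↪  (beta, the two rewrite rules, delta),
   closed under contexts; rewrite rules closed under substitution with
   level variables instantiated by level expressions only. *)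
Inductive red1 (sig : signature) : term -> term -> Prop :=
  | r_beta_ord A M N :
      red1 sig (App (Lam Ord A M) N) (subst Ord 0 N M)
  | r_beta_lev A M l : is_level l ->
      red1 sig (App (Lam Lev A M) l) (subst Lev 0 l M)
  | r_El_u l' l : is_level l' -> is_level l ->
      red1 sig (tEl l' (tu l)) (tU l)
  | r_El_pi l' lA lB A B : is_level l' -> is_level lA -> is_level lB ->
      red1 sig (tEl l' (tpi lA lB A B))
        (Pi Ord (tEl lA A) (tEl (lift Ord 0 lB) (App (lift Ord 0 B) (Var 0))))
  | r_delta n A M : sig n = Some (A, M) ->
      red1 sig (Const (CDef n)) M
  | r_appl M M' N : red1 sig M M' -> red1 sig (App M N) (App M' N)
  | r_appr M N N' : red1 sig N N' -> red1 sig (App M N) (App M N')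
  | r_lam_ty k A A' M : red1 sig A A' -> red1 sig (Lam k A M) (Lam k A' M)
  | r_lam_bd k A M M' : red1 sig M M' -> red1 sig (Lam k A M) (Lam k A M')
  | r_pi_ty k A A' B : red1 sig A A' -> red1 sig (Pi k A B) (Pi k A' B)
  | r_pi_bd k A B B' : red1 sig B B' -> red1 sig (Pi k A B) (Pi k A B').

Definition red_star (sig : signature) : term -> term -> Prop :=
  clos_refl_trans term (red1 sig).

Definition confluent (R : term -> term -> Prop) : Prop :=
  forall M N1 N2, clos_refl_trans term R M N1 -> clos_refl_trans term R M N2 ->
    exists P, clos_refl_trans term R N1 P /\ clos_refl_trans term R N2 P.

(* ≃ : smallest congruence containing the level equations, closed under
   substitution of level variables by level expressions (the equations are
   taken with arbitrary level expressions for i, i1, i2, i3). *)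
Inductive lvl_eq : term -> term -> Prop :=
  | le_assoc l1 l2 l3 : is_level l1 -> is_level l2 -> is_level l3 ->
      lvl_eq (tmax l1 (tmax l2 l3)) (tmax (tmax l1 l2) l3)
  | le_comm l1 l2 : is_level l1 -> is_level l2 ->
      lvl_eq (tmax l1 l2) (tmax l2 l1)
  | le_sdist l1 l2 : is_level l1 -> is_level l2 ->
      lvl_eq (ts (tmax l1 l2)) (tmax (ts l1) (ts l2))
  | le_ssub l : is_level l -> lvl_eq (tmax l (ts l)) (ts l)
  | le_zero l : is_level l -> lvl_eq (tmax l tz) l
  | le_idem l : is_level l -> lvl_eq (tmax l l) l
  | le_refl M : lvl_eq M M
  | le_sym M N : lvl_eq M N -> lvl_eq N M
  | le_trans M N P : lvl_eq M N -> lvl_eq N P -> lvl_eq M P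
  | le_app M M' N N' : lvl_eq M M' -> lvl_eq N N' -> lvl_eq (App M N) (App M' N')
  | le_lam k A A' M M' : lvl_eq A A' -> lvl_eq M M' -> lvl_eq (Lam k A M) (Lam k A' M')
  | le_pi k A A' B B' : lvl_eq A A' -> lvl_eq B B' -> lvl_eq (Pi k A B) (Pi k A' B').

Definition conv (sig : signature) : term -> term -> Prop :=
  clos_refl_sym_trans term (fun M N => red1 sig M N \/ lvl_eq M N).

(* Confluence is proved à la Tait–Martin-Löf–Takahashi: parallel reduction
   lies between one-step and many-step reduction and has the triangle property
   with respect to the complete development [rho], hence the diamond property.
   Levels are normal forms, and [lvl_eq] can only relate levels to levels, so
   two [lvl_eq]-related terms have the same shape outside their level subterms
   ([lvl_str]).  Since the rewrite rules only inspect levels in level positions,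
   every redex of one term is matched by a redex of the same shape in the other,
   with [lvl_eq]-related contracta; this is the commutation (2).  Part (3)
   follows by induction on the conversion, joining with confluence and pushing
   [lvl_eq] along many-step reductions with (2). *)

From Stdlib Require Import Arith Lia Relations Bool.

Section Diamond.

Variables (A : Type) (R : relation A).

Definition diamond : Prop :=
  forall x y1 y2, R x y1 -> R x y2 -> exists z, R y1 z /\ R y2 z.

Hypothesis R_diamond : diamond.

Lemma diamond_strip x y1 y2 : clos_refl_trans A R x y1 -> R x y2 ->
  exists z, R y1 z /\ clos_refl_trans A R y2 z.
Proof.
  intros H; revert y2; induction H as [x y1 Hxy| x | x y y1 _ IH1 _ IH2]; intros y2 Hy2.
  - destruct (R_diamond x y1 y2 Hxy Hy2) as [z [Hz1 Hz2]].
    exists z; split; [exact Hz1 | apply rt_step; exact Hz2].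
  - exists y2; split; [exact Hy2 | apply rt_refl].
  - destruct (IH1 y2 Hy2) as [z1 [Hyz1 Hz1]].
    destruct (IH2 z1 Hyz1) as [z [Hz Hz1z]].
    exists z; split; [exact Hz | eapply rt_trans; eassumption].
Qed.

Lemma diamond_clos_rt x y1 y2 : clos_refl_trans A R x y1 -> clos_refl_trans A R x y2 ->
  exists z, clos_refl_trans A R y1 z /\ clos_refl_trans A R y2 z.
Proof.
  intros H; revert y2; induction H as [x y1 Hxy| x | x y y1 _ IH1 _ IH2]; intros y2 Hy2.
  - destruct (diamond_strip x y2 y1 Hy2 Hxy) as [z [Hz1 Hz2]].
    exists z; split; [exact Hz2 | apply rt_step; exact Hz1].
  - exists y2; split; [exact Hy2 | apply rt_refl].
  - destruct (IH1 y2 Hy2) as [z1 [Hyz1 Hz1]].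
    destruct (IH2 z1 Hyz1) as [z [Hz Hz1z]].
    exists z; split; [exact Hz | eapply rt_trans; eassumption].
Qed.

End Diamond.

Lemma clos_rt_map (A B : Type) (R : relation A) (R' : relation B) (f : A -> B) :
  (forall x y, R x y -> R' (f x) (f y)) ->
  forall x y, clos_refl_trans A R x y -> clos_refl_trans B R' (f x) (f y).
Proof.
  intros Hf x y H; induction H.
  - apply rt_step; auto.
  - apply rt_refl.
  - eapply rt_trans; eassumption.
Qed.

Lemma clos_rt_incl (A : Type) (R R' : relation A) :
  inclusion A R (clos_refl_trans A R') ->
  inclusion A (clos_refl_trans A R) (clos_refl_trans A R').
Proof.
  intros Hincl x y H; induction H; [auto | apply rt_refl | eapply rt_trans; eassumption].
Qed.

Lemma diamond_sandwich_confluent (A : Type) (R P : relation A) :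
  inclusion A R P -> inclusion A P (clos_refl_trans A R) -> diamond A P ->
  forall x y1 y2, clos_refl_trans A R x y1 -> clos_refl_trans A R x y2 ->
  exists z, clos_refl_trans A R y1 z /\ clos_refl_trans A R y2 z.
Proof.
  intros HRP HPR HP x y1 y2 H1 H2.
  assert (HRP' : inclusion A R (clos_refl_trans A P)) by (intros ? ? ?; apply rt_step; auto).
  destruct (diamond_clos_rt A P HP x y1 y2 (clos_rt_incl _ _ _ HRP' _ _ H1)
              (clos_rt_incl _ _ _ HRP' _ _ H2)) as [z [Hz1 Hz2]].
  exists z; split; apply (clos_rt_incl _ _ _ HPR); assumption.
Qed.

Ltac kind_hyps := repeat match goal with
  | H : ?a = ?a -> _ |- _ => specialize (H eq_refl)
  | H : Ord = Lev -> _ |- _ => clear H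
  | H : Lev = Ord -> _ |- _ => clear H
  end.

Ltac index_arith :=
  kind_hyps;
  repeat (cbn [lift subst bump vkind_eqb Nat.pred] in *; match goal with
    | |- context [Nat.ltb ?a ?b] => destruct (Nat.ltb_spec a b)
    | |- context [Nat.eqb ?a ?b] => destruct (Nat.eqb_spec a b)
    end);
  cbn [lift subst bump vkind_eqb Nat.pred] in *;
  try reflexivity; try (exfalso; lia); try (f_equal; lia).

Ltac bump_side :=
  intros; subst; repeat match goal with k : vkind |- _ => destruct k end;
  cbn [bump vkind_eqb] in *; kind_hyps; try discriminate; lia.

Lemma bump_comm k k1 k2 d : bump k k1 (bump k k2 d) = bump k k2 (bump k k1 d).
Proof. destruct k, k1, k2; reflexivity. Qed.

Lemma lift_lift M : forall k k' c e, (k = k' -> e <= c) ->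
  lift k (bump k k' c) (lift k' e M) = lift k' e (lift k c M).
Proof.
  induction M as [n|n|c|P IHP Q IHQ|kk P IHP Q IHQ|kk P IHP Q IHQ| |];
    intros k k' c' e H; cbn [lift]; try reflexivity.
  1,2: destruct k, k'; index_arith.
  all: f_equal; auto; rewrite bump_comm; apply IHQ; bump_side.
Qed.

Lemma subst_lift M : forall k d N, subst k d N (lift k d M) = M.
Proof.
  induction M as [n|n|c|P IHP Q IHQ|kk P IHP Q IHQ|kk P IHP Q IHQ| |];
    intros k d N; cbn [lift subst]; try reflexivity.
  1,2: destruct k; index_arith.
  all: f_equal; auto.
Qed.

Lemma lift_subst_lo M : forall k k' c d N, (k' = k -> c <= d) ->
  lift k' c (subst k d N M) = subst k (bump k k' d) (lift k' c N) (lift k' c M).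
Proof.
  induction M as [n|n|c|P IHP Q IHQ|kk P IHP Q IHQ|kk P IHP Q IHQ| |];
    intros k k' c' d N H; cbn [lift subst]; try reflexivity.
  1,2: destruct k, k'; index_arith.
  all: f_equal; auto; rewrite IHQ by bump_side; rewrite bump_comm; f_equal;
    apply lift_lift; bump_side.
Qed.

Lemma lift_subst_hi M : forall k k' c d N, (k' = k -> d <= c) ->
  lift k' c (subst k d N M) = subst k d (lift k' c N) (lift k' (bump k' k c) M).
Proof.
  induction M as [n|n|c|P IHP Q IHQ|kk P IHP Q IHQ|kk P IHP Q IHQ| |];
    intros k k' c' d N H; cbn [lift subst]; try reflexivity.
  1,2: destruct k, k'; index_arith.
  all: f_equal; auto; rewrite IHQ by bump_side; rewrite bump_comm; f_equal;
    apply lift_lift; bump_side.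
Qed.

Lemma subst_subst M : forall k k' d e N Q, (k = k' -> e <= d) ->
  subst k d N (subst k' e Q M) =
  subst k' e (subst k d N Q) (subst k (bump k k' d) (lift k' e N) M).
Proof.
  induction M as [n|n|c|P IHP R IHR|kk P IHP R IHR|kk P IHP R IHR| |];
    intros k k' d e N Q H; cbn [subst]; try reflexivity.
  1,2: destruct k, k'; index_arith; rewrite subst_lift; reflexivity.
  all: f_equal; auto.
  all: rewrite IHR by bump_side; f_equal;
    [symmetry; apply lift_subst_lo; bump_side
    | rewrite bump_comm; f_equal; apply lift_lift; bump_side].
Qed.

Lemma closed_at_lift M : forall o l k c, closed_at o l M = true ->
  (k = Ord -> o <= c) -> (k = Lev -> l <= c) -> lift k c M = M.
Proof.
  induction M as [n|n|c|P IHP Q IHQ|kk P IHP Q IHQ|kk P IHP Q IHQ| |];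
    intros o l k c' Hc Ho Hl; cbn [closed_at] in Hc; cbn [lift]; try reflexivity.
  1,2: apply Nat.ltb_lt in Hc; destruct k; index_arith.
  all: try destruct kk; apply andb_prop in Hc as [HcP HcQ]; f_equal; eauto;
    eapply IHQ; eauto; bump_side.
Qed.

Lemma closed_at_subst M : forall o l k c N, closed_at o l M = true ->
  (k = Ord -> o <= c) -> (k = Lev -> l <= c) -> subst k c N M = M.
Proof.
  induction M as [n|n|c|P IHP Q IHQ|kk P IHP Q IHQ|kk P IHP Q IHQ| |];
    intros o l k c' N Hc Ho Hl; cbn [closed_at] in Hc; cbn [subst]; try reflexivity.
  1,2: apply Nat.ltb_lt in Hc; destruct k; index_arith.
  all: try destruct kk; apply andb_prop in Hc as [HcP HcQ]; f_equal; eauto;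
    eapply IHQ; eauto; bump_side.
Qed.

Lemma closed_lift M k c : closed M -> lift k c M = M.
Proof. intros H; eapply closed_at_lift; eauto; lia. Qed.

Lemma closed_subst M k c N : closed M -> subst k c N M = M.
Proof. intros H; eapply closed_at_subst; eauto; lia. Qed.

Lemma is_level_lift l k c : is_level l -> is_level (lift k c l).
Proof.
  induction 1; cbn [lift tz ts tmax] in *.
  - destruct k; [constructor | destruct (i <? c); constructor].
  - constructor.
  - apply (lv_s (lift k c l)); auto.
  - apply (lv_max (lift k c l) (lift k c l')); auto.
Qed.

Lemma subst_Ord_level l d N : is_level l -> subst Ord d N l = l.
Proof. induction 1; unfold tz, ts, tmax in *; cbn [subst]; congruence. Qed.

Lemma is_level_subst l k d N : is_level l -> (k = Lev -> is_level N) ->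
  is_level (subst k d N l).
Proof.
  intros Hl HN; destruct k; [rewrite subst_Ord_level; auto |].
  specialize (HN eq_refl); induction Hl; cbn [subst tz ts tmax] in *.
  - destruct (i <? d); [constructor |]. destruct (i =? d); [auto | constructor].
  - constructor.
  - apply (lv_s (subst Lev d N l)); auto.
  - apply (lv_max (subst Lev d N l) (subst Lev d N l')); auto.
Qed.

Fixpoint is_levelb (M : term) : bool :=
  match M with
  | LVar _ => true
  | Const Cz => true
  | App (Const Cs) l => is_levelb l
  | App (App (Const Cmax) l) l' => is_levelb l && is_levelb l'
  | _ => false
  end.

Lemma is_levelb_iff M : is_levelb M = true <-> is_level M.
Proof.
  split.
  2: induction 1; cbn; auto; rewrite IHis_level1, IHis_level2; reflexivity.
  revert M; fix IH 1; intros M H.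
  destruct M as [| |c|M1 M2| | | |]; try discriminate.
  - constructor.
  - destruct c; try discriminate; constructor.
  - destruct M1 as [| |c|M11 M12| | | |]; try discriminate.
    + destruct c; try discriminate. apply (lv_s M2), IH, H.
    + destruct M11 as [| |c| | | | |]; try discriminate; destruct c; try discriminate.
      apply andb_prop in H as [H1 H2]. apply (lv_max M12 M2); apply IH; assumption.
Qed.

(* [rho sig M] is the complete development of [M]. *)
Definition el_red (Q rQ dflt : term) : term :=
  match Q with
  | App (Const Cu) l => if is_levelb l then tU l else dflt
  | App (App (App (App (Const Cpi) lA) lB) _) _ =>
      if is_levelb lA && is_levelb lB then
        match rQ with
        | App (App _ rA) rB =>
            Pi Ord (tEl lA rA) (tEl (lift Ord 0 lB) (App (lift Ord 0 rB) (Var 0)))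
        | _ => dflt
        end
      else dflt
  | _ => dflt
  end.

Definition rho_app (P Q rP rQ : term) : term :=
  match P with
  | Lam Ord _ _ => match rP with Lam _ _ b => subst Ord 0 rQ b | _ => App rP rQ end
  | Lam Lev _ _ =>
      if is_levelb Q then match rP with Lam _ _ b => subst Lev 0 Q b | _ => App rP rQ end
      else App rP rQ
  | App (Const CEl) l' => if is_levelb l' then el_red Q rQ (App rP rQ) else App rP rQ
  | _ => App rP rQ
  end.

Fixpoint rho (sig : signature) (M : term) : term :=
  match M with
  | Const (CDef n) => match sig n with Some (_, B) => B | None => Const (CDef n) end
  | App P Q => rho_app P Q (rho sig P) (rho sig Q)
  | Lam k A P => Lam k (rho sig A) (rho sig P)
  | Pi k A B => Pi k (rho sig A) (rho sig B)
  | _ => M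
  end.

Ltac default_case := left; cbn;
  repeat match goal with H : is_levelb _ = _ |- _ => rewrite H; clear H end; reflexivity.

Lemma el_red_cases Q rQ d :
  el_red Q rQ d = d \/
  (exists l, Q = tu l /\ is_level l /\ el_red Q rQ d = tU l) \/
  (exists lA lB A B X rA rB, Q = tpi lA lB A B /\ is_level lA /\ is_level lB /\
     rQ = App (App X rA) rB /\
     el_red Q rQ d = Pi Ord (tEl lA rA) (tEl (lift Ord 0 lB) (App (lift Ord 0 rB) (Var 0)))).
Proof.
  destruct Q as [| | |Q1 Q2| | | |]; try default_case.
  destruct Q1 as [| |c|Q11 Q12| | | |]; try default_case.
  - destruct c; try default_case.
    destruct (is_levelb Q2) eqn:HQ2; [| default_case].
    right; left; exists Q2; cbn; rewrite HQ2; repeat split; apply is_levelb_iff; auto.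
  - destruct Q11 as [| | |Q111 Q112| | | |]; try default_case.
    destruct Q111 as [| | |Q1111 Q1112| | | |]; try default_case.
    destruct Q1111 as [| |c| | | | |]; try default_case.
    destruct c; try default_case.
    destruct (is_levelb Q1112) eqn:HA; [| default_case].
    destruct (is_levelb Q112) eqn:HB; [| default_case].
    destruct rQ as [| | |R1 R2| | | |]; try default_case.
    destruct R1 as [| | |R11 R12| | | |]; try default_case.
    right; right; exists Q1112, Q112, Q12, Q2, R11, R12, R2.
    cbn; rewrite HA, HB; repeat split; apply is_levelb_iff; auto.
Qed.

Lemma rho_app_cases P Q rP rQ :
  rho_app P Q rP rQ = App rP rQ \/
  (exists A B k a b, P = Lam Ord A B /\ rP = Lam k a b /\
     rho_app P Q rP rQ = subst Ord 0 rQ b) \/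
  (exists A B k a b, P = Lam Lev A B /\ is_level Q /\ rP = Lam k a b /\
     rho_app P Q rP rQ = subst Lev 0 Q b) \/
  (exists l', P = App (Const CEl) l' /\ is_level l' /\
     rho_app P Q rP rQ = el_red Q rQ (App rP rQ)).
Proof.
  destruct P as [| | |P1 P2|k A B| | |]; try default_case.
  - destruct P1 as [| |c| | | | |]; try default_case.
    destruct c; try default_case.
    destruct (is_levelb P2) eqn:HP2; [| default_case].
    right; right; right; exists P2; cbn; rewrite HP2; split; [| split]; auto.
    apply is_levelb_iff; auto.
  - destruct k.
    + destruct rP as [| | | |k a b| | |]; try default_case.
      right; left; exists A, B, k, a, b; auto.
    + destruct (is_levelb Q) eqn:HQ; [| default_case].
      destruct rP as [| | | |k a b| | |]; try default_case.
      right; right; left; exists A, B, k, a, b; cbn; rewrite HQ.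
      repeat split; apply is_levelb_iff; auto.
Qed.

Inductive par (sig : signature) : term -> term -> Prop :=
  | p_var n : par sig (Var n) (Var n)
  | p_lvar n : par sig (LVar n) (LVar n)
  | p_const c : par sig (Const c) (Const c)
  | p_type : par sig TypeS TypeS
  | p_kind : par sig KindS KindS
  | p_app M M' N N' : par sig M M' -> par sig N N' -> par sig (App M N) (App M' N')
  | p_lam k A A' M M' : par sig A A' -> par sig M M' -> par sig (Lam k A M) (Lam k A' M')
  | p_pi k A A' B B' : par sig A A' -> par sig B B' -> par sig (Pi k A B) (Pi k A' B')
  | p_beta_ord A M M' N N' : par sig M M' -> par sig N N' ->
      par sig (App (Lam Ord A M) N) (subst Ord 0 N' M')
  | p_beta_lev A M M' l : par sig M M' -> is_level l ->
      par sig (App (Lam Lev A M) l) (subst Lev 0 l M')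
  | p_El_u l' l : is_level l' -> is_level l -> par sig (tEl l' (tu l)) (tU l)
  | p_El_pi l' lA lB A A' B B' : is_level l' -> is_level lA -> is_level lB ->
      par sig A A' -> par sig B B' ->
      par sig (tEl l' (tpi lA lB A B))
        (Pi Ord (tEl lA A') (tEl (lift Ord 0 lB) (App (lift Ord 0 B') (Var 0))))
  | p_delta n A M : sig n = Some (A, M) -> par sig (Const (CDef n)) M.

Section ParallelReduction.

Variable sig : signature.
Hypothesis sig_closed : forall n A M, sig n = Some (A, M) -> closed M.

Lemma par_refl M : par sig M M.
Proof. induction M; constructor; auto. Qed.

Lemma level_par_inv l X : is_level l -> par sig l X -> X = l.
Proof.
  intros Hl; revert X; induction Hl; intros X HX; unfold tz, ts, tmax in *;
    inversion HX; subst; auto;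
    repeat match goal with
    | H : par _ (Const _) _ |- _ => inversion H; subst; clear H
    | H : par _ (App (Const _) _) _ |- _ => inversion H; subst; clear H
    end;
    repeat f_equal; auto.
Qed.

Lemma par_lift M M' : par sig M M' -> forall k d, par sig (lift k d M) (lift k d M').
Proof.
  induction 1; intros k' e; cbn [lift].
  - destruct k'; [destruct (n <? e) |]; constructor.
  - destruct k'; [| destruct (n <? e)]; constructor.
  - constructor.
  - constructor.
  - constructor.
  - constructor; auto.
  - constructor; auto.
  - constructor; auto.
  - rewrite lift_subst_hi by (intros; subst; lia). apply p_beta_ord; auto.
  - rewrite lift_subst_hi by (intros; subst; lia).
    apply p_beta_lev; auto. apply is_level_lift; auto.
  - apply p_El_u; apply is_level_lift; auto.
  - unfold tEl, tpi; cbn [lift].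
    rewrite (lift_lift lB k' Ord e 0), (lift_lift B' k' Ord e 0) by (intros; lia).
    destruct k'; apply p_El_pi; auto using is_level_lift.
  - rewrite closed_lift by eauto. econstructor; eauto.
Qed.

Lemma subst_level_par l k d N N' : is_level l -> par sig N N' ->
  (k = Lev -> is_level N) -> subst k d N' l = subst k d N l.
Proof.
  intros Hl HN HNl; destruct k.
  - rewrite !subst_Ord_level; auto.
  - rewrite (level_par_inv N N'); auto.
Qed.

Lemma par_subst M M' : par sig M M' -> forall k d N N', par sig N N' ->
  (k = Lev -> is_level N) -> par sig (subst k d N M) (subst k d N' M').
Proof.
  induction 1; intros k' d N1 N1' HN HNl.
  - destruct k'; cbn [subst]; [| constructor].
    destruct (n <? d); [constructor |]. destruct (n =? d); [auto | constructor].
  - destruct k'; cbn [subst]; [constructor |].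
    destruct (n <? d); [constructor |]. destruct (n =? d); [auto | constructor].
  - constructor.
  - constructor.
  - constructor.
  - cbn [subst]; constructor; auto.
  - cbn [subst]; constructor; auto.
    apply IHpar2; [apply par_lift; auto | intros; apply is_level_lift; auto].
  - cbn [subst]; constructor; auto.
    apply IHpar2; [apply par_lift; auto | intros; apply is_level_lift; auto].
  - rewrite subst_subst by bump_side. cbn [subst].
    apply p_beta_ord; auto.
    apply IHpar1; [apply par_lift; auto | intros; apply is_level_lift; auto].
  - rewrite subst_subst by bump_side. cbn [subst].
    rewrite (subst_level_par l k' d N1 N1'); auto.
    apply p_beta_lev; [| apply is_level_subst; auto].
    apply IHpar; [apply par_lift; auto | intros; apply is_level_lift; auto].
  - unfold tEl, tu, tU; cbn [subst].
    rewrite (subst_level_par l k' d N1 N1'); auto.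
    apply (p_El_u sig (subst k' d N1 l') (subst k' d N1 l)); apply is_level_subst; auto.
  - unfold tEl, tpi; cbn [subst].
    rewrite <- (lift_subst_lo lB k' Ord 0 d N1'), <- (lift_subst_lo B' k' Ord 0 d N1')
      by (intros; lia).
    rewrite (subst_level_par lA k' d N1 N1'), (subst_level_par lB k' d N1 N1') by auto.
    destruct k'; apply p_El_pi; auto using is_level_subst.
  - cbn [subst]. rewrite closed_subst by eauto. econstructor; eauto.
Qed.

Lemma par_lam_inv k A B X : par sig (Lam k A B) X ->
  exists A' B', X = Lam k A' B' /\ par sig A A' /\ par sig B B'.
Proof. intros H; inversion H; subst; eauto. Qed.

Lemma par_app_const_inv c l X : par sig (App (Const c) l) X -> (forall n, c <> CDef n) ->
  is_level l -> X = App (Const c) l.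
Proof.
  intros H Hc Hl; inversion H as [| | | | |? M' ? N' HM HN| | | | | | |]; subst.
  inversion HM; subst; [| exfalso; eapply Hc; eauto].
  f_equal; eapply level_par_inv; eauto.
Qed.

Lemma par_tpi_inv lA lB A B X : is_level lA -> is_level lB ->
  par sig (tpi lA lB A B) X ->
  exists A' B', X = tpi lA lB A' B' /\ par sig A A' /\ par sig B B'.
Proof.
  intros HA HB H; unfold tpi in H.
  inversion H as [| | | | |M1 M1' N1 N1' H1 H2| | | | | | |]; subst.
  inversion H1 as [| | | | |M2 M2' N2 N2' H3 H4| | | | | | |]; subst.
  inversion H3 as [| | | | |M3 M3' N3 N3' H5 H6| | | | | | |]; subst.
  apply par_app_const_inv in H5; try discriminate; auto; subst.
  rewrite (level_par_inv _ _ HB H6).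
  exists N2', N1'; auto.
Qed.

Lemma par_el_red l' N N' d : is_level l' -> par sig N N' -> par sig N' (rho sig N) ->
  par sig (tEl l' N') d -> par sig (tEl l' N') (el_red N (rho sig N) d).
Proof.
  intros Hl' HN IHN Hd.
  destruct (el_red_cases N (rho sig N) d)
    as [-> | [[l [-> [Hl ->]]] | [lA [lB [A [B [X [rA [rB [-> [HA [HB [ErN ->]]]]]]]]]]]]].
  - exact Hd.
  - rewrite (par_app_const_inv _ _ _ HN) by (discriminate || auto).
    apply p_El_u; auto.
  - apply par_tpi_inv in HN as [A' [B' [-> [HAA' HBB']]]]; auto.
    apply par_tpi_inv in IHN as [A'' [B'' [E [HA' HB']]]]; auto.
    rewrite ErN in E; injection E as _ -> ->.
    apply p_El_pi; auto.
Qed.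

Lemma par_rho_app M M' N N' : par sig M M' -> par sig N N' ->
  par sig M' (rho sig M) -> par sig N' (rho sig N) ->
  par sig (App M' N') (rho_app M N (rho sig M) (rho sig N)).
Proof.
  intros HM HN IHM IHN.
  destruct (rho_app_cases M N (rho sig M) (rho sig N)) as
    [-> | [[A [B [k [a [b [-> [ErM ->]]]]]]] | [[A [B [k [a [b [-> [Hl [ErM ->]]]]]]]]
    | [l' [-> [Hl' ->]]]]]].
  - constructor; auto.
  - cbn [rho] in ErM; injection ErM as <- <- <-.
    apply par_lam_inv in HM as [A' [B' [-> [_ HB]]]].
    apply par_lam_inv in IHM as [A'' [B'' [E [_ HB']]]]; injection E as <- <-.
    apply p_beta_ord; auto.
  - cbn [rho] in ErM; injection ErM as <- <- <-.
    apply par_lam_inv in HM as [A' [B' [-> [_ HB]]]].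
    apply par_lam_inv in IHM as [A'' [B'' [E [_ HB']]]]; injection E as <- <-.
    rewrite (level_par_inv N N'); auto.
    apply p_beta_lev; auto.
  - rewrite (par_app_const_inv _ _ _ HM) in * by (discriminate || auto).
    apply par_el_red; auto. constructor; auto.
Qed.

Ltac rewrite_levelb := repeat match goal with
  | H : is_level ?l |- context [is_levelb ?l] => rewrite (proj2 (is_levelb_iff l) H)
  end.

Lemma par_rho M N : par sig M N -> par sig N (rho sig M).
Proof.
  induction 1; cbn [rho rho_app].
  - constructor.
  - constructor.
  - destruct c; try constructor.
    destruct (sig n) as [[A B] |] eqn:E; [econstructor; eauto | constructor].
  - constructor.
  - constructor.
  - apply par_rho_app; auto.
  - constructor; auto.
  - constructor; auto.
  - apply par_subst; auto. discriminate.
  - rewrite_levelb. apply par_subst; auto. apply par_refl.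
  - unfold tEl, tu, tU; cbn [rho rho_app el_red]; rewrite_levelb.
    apply par_refl.
  - unfold tEl, tpi; cbn [rho rho_app el_red]; rewrite_levelb.
    unfold tEl; repeat constructor; auto; try apply par_refl; apply par_lift; auto.
  - rewrite H. apply par_refl.
Qed.

Lemma par_diamond : diamond term (par sig).
Proof. intros M N1 N2 H1 H2; exists (rho sig M); split; apply par_rho; auto. Qed.

Lemma red1_par M N : red1 sig M N -> par sig M N.
Proof.
  induction 1;
    first [ apply p_beta_ord; apply par_refl | apply p_beta_lev; auto; apply par_refl
          | apply p_El_u; auto | apply p_El_pi; auto; apply par_refl
          | solve [econstructor; eauto using par_refl] ].
Qed.

Lemma red_star_congr2 (f : term -> term -> term) :
  (forall M M' N, red1 sig M M' -> red1 sig (f M N) (f M' N)) ->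
  (forall M N N', red1 sig N N' -> red1 sig (f M N) (f M N')) ->
  forall M M' N N', red_star sig M M' -> red_star sig N N' ->
  red_star sig (f M N) (f M' N').
Proof.
  intros Hl Hr M M' N N' HM HN; apply rt_trans with (f M' N).
  - exact (clos_rt_map _ _ _ _ (fun X => f X N) (fun X Y => Hl X Y N) _ _ HM).
  - exact (clos_rt_map _ _ _ _ (f M') (Hr M') _ _ HN).
Qed.

Lemma red_star_app M M' N N' : red_star sig M M' -> red_star sig N N' ->
  red_star sig (App M N) (App M' N').
Proof. apply red_star_congr2; constructor; auto. Qed.

Lemma red_star_lam k A A' M M' : red_star sig A A' -> red_star sig M M' ->
  red_star sig (Lam k A M) (Lam k A' M').
Proof. apply red_star_congr2; constructor; auto. Qed.

Lemma red_star_pi k A A' B B' : red_star sig A A' -> red_star sig B B' ->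
  red_star sig (Pi k A B) (Pi k A' B').
Proof. apply red_star_congr2; constructor; auto. Qed.

Lemma par_red_star M N : par sig M N -> red_star sig M N.
Proof.
  induction 1; try apply rt_refl.
  - apply red_star_app; auto.
  - apply red_star_lam; auto.
  - apply red_star_pi; auto.
  - eapply rt_trans; [apply red_star_app; [apply red_star_lam |]; eauto; apply rt_refl |].
    apply rt_step; constructor.
  - eapply rt_trans; [apply red_star_app; [apply red_star_lam |]; eauto; apply rt_refl |].
    apply rt_step; constructor; auto.
  - apply rt_step; constructor; auto.
  - eapply rt_trans.
    + unfold tEl, tpi; apply red_star_app; [apply rt_refl |].
      apply red_star_app; [apply red_star_app; [apply rt_refl |] |]; eauto.
    + apply rt_step; constructor; auto.
  - apply rt_step; econstructor; eauto.
Qed.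

Lemma red1_confluent : confluent (red1 sig).
Proof.
  intros M N1 N2.
  apply (diamond_sandwich_confluent term (red1 sig) (par sig) red1_par par_red_star).
  apply par_diamond; auto.
Qed.

End ParallelReduction.

Lemma lvl_eq_lift A B : lvl_eq A B -> forall k d, lvl_eq (lift k d A) (lift k d B).
Proof.
  induction 1; intros k' d; cbn [lift].
  1-6: econstructor; eauto using is_level_lift.
  - apply le_refl.
  - apply le_sym; auto.
  - eapply le_trans; eauto.
  - apply le_app; auto.
  - apply le_lam; auto.
  - apply le_pi; auto.
Qed.

Lemma lvl_eq_subst_l A B : lvl_eq A B -> forall k d Q, (k = Lev -> is_level Q) ->
  lvl_eq (subst k d Q A) (subst k d Q B).
Proof.
  induction 1; intros k' d Q HQ; cbn [subst].
  1-6: econstructor; eauto using is_level_subst.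
  - apply le_refl.
  - apply le_sym; auto.
  - eapply le_trans; eauto.
  - apply le_app; auto.
  - apply le_lam; auto. apply IHlvl_eq2. intros; apply is_level_lift; auto.
  - apply le_pi; auto. apply IHlvl_eq2. intros; apply is_level_lift; auto.
Qed.

Lemma lvl_eq_subst_r M : forall k d Q Q', lvl_eq Q Q' ->
  lvl_eq (subst k d Q M) (subst k d Q' M).
Proof.
  induction M as [n|n|c|P IHP R IHR|kk P IHP R IHR|kk P IHP R IHR| |];
    intros k d Q Q' HQ; cbn [subst]; try apply le_refl.
  - destruct k; [| apply le_refl].
    destruct (n <? d); [apply le_refl |]. destruct (n =? d); [auto | apply le_refl].
  - destruct k; [apply le_refl |].
    destruct (n <? d); [apply le_refl |]. destruct (n =? d); [auto | apply le_refl].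
  - apply le_app; auto.
  - apply le_lam; auto. apply IHR, lvl_eq_lift; auto.
  - apply le_pi; auto. apply IHR, lvl_eq_lift; auto.
Qed.

Lemma lvl_eq_subst k d M M' Q Q' : lvl_eq M M' -> lvl_eq Q Q' ->
  (k = Lev -> is_level Q) -> lvl_eq (subst k d Q M) (subst k d Q' M').
Proof.
  intros HM HQ HQl; eapply le_trans; [apply lvl_eq_subst_l; eauto | apply lvl_eq_subst_r; auto].
Qed.

(* [lvl_eq] relates exactly the terms that agree outside their maximal level
   subterms, these being pairwise [lvl_eq] ([lvl_str_sound], [lvl_eq_str]). *)
Inductive lvl_str : term -> term -> Prop :=
  | ls_level M N : is_level M -> is_level N -> lvl_eq M N -> lvl_str M N
  | ls_var n : lvl_str (Var n) (Var n)
  | ls_const c : lvl_str (Const c) (Const c)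
  | ls_app M M' N N' : lvl_str M M' -> lvl_str N N' -> lvl_str (App M N) (App M' N')
  | ls_lam k A A' M M' : lvl_str A A' -> lvl_str M M' -> lvl_str (Lam k A M) (Lam k A' M')
  | ls_pi k A A' B B' : lvl_str A A' -> lvl_str B B' -> lvl_str (Pi k A B) (Pi k A' B')
  | ls_type : lvl_str TypeS TypeS
  | ls_kind : lvl_str KindS KindS.

Lemma lvl_str_refl M : lvl_str M M.
Proof.
  induction M.
  - apply ls_var.
  - apply ls_level; constructor.
  - apply ls_const.
  - apply ls_app; auto.
  - apply ls_lam; auto.
  - apply ls_pi; auto.
  - apply ls_type.
  - apply ls_kind.
Qed.

Lemma lvl_str_sound M N : lvl_str M N -> lvl_eq M N.
Proof.
  induction 1; auto using le_refl, le_app, le_lam, le_pi.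
Qed.

Lemma lvl_str_sym M N : lvl_str M N -> lvl_str N M.
Proof.
  induction 1.
  - apply ls_level; auto using le_sym.
  - apply ls_var.
  - apply ls_const.
  - apply ls_app; auto.
  - apply ls_lam; auto.
  - apply ls_pi; auto.
  - apply ls_type.
  - apply ls_kind.
Qed.

Lemma lvl_str_const_inv M c : lvl_str M (Const c) -> ~ is_level (Const c) -> M = Const c.
Proof. intros H Hn; inversion H; subst; auto. contradiction. Qed.

Lemma lvl_str_app_inv M X Y : lvl_str M (App X Y) -> ~ is_level (App X Y) ->
  exists M1 M2, M = App M1 M2 /\ lvl_str M1 X /\ lvl_str M2 Y.
Proof. intros H Hn; inversion H; subst; eauto. contradiction. Qed.

Lemma lvl_str_lam_inv M k X Y : lvl_str M (Lam k X Y) ->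
  exists M1 M2, M = Lam k M1 M2 /\ lvl_str M1 X /\ lvl_str M2 Y.
Proof.
  intros H; inversion H; subst; eauto.
  match goal with H : is_level _ |- _ => inversion H end.
Qed.

Ltac not_level := let H := fresh in intro H; inversion H.

Lemma lvl_str_level N : is_level N -> forall M, lvl_str M N -> is_level M.
Proof.
  induction 1; intros M HM; inversion HM; subst; auto.
  - constructor.
  - match goal with H : lvl_str ?X (Const Cs) |- _ =>
      apply lvl_str_const_inv in H; [subst X | not_level] end.
    apply lv_s; auto.
  - match goal with H : lvl_str ?X (App (Const Cmax) l) |- _ =>
      apply lvl_str_app_inv in H as [M1 [M2 [-> [H1 H2]]]]; [| not_level] end.
    apply lvl_str_const_inv in H1; [subst | not_level].
    apply lv_max; auto.
Qed.

Lemma lvl_str_trans M N : lvl_str M N -> forall P, lvl_str N P -> lvl_str M P.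
Proof.
  induction 1 as [M N HM HN HMN| | |M M' N N' HMM' IH1 HNN' IH2|k A A' M M' _ IH1 _ IH2
    |k A A' B B' _ IH1 _ IH2| |]; intros P HP; auto.
  - assert (is_level P) by (apply (lvl_str_level N); auto using lvl_str_sym).
    apply ls_level; auto. eapply le_trans; [eauto | apply lvl_str_sound; auto].
  - inversion HP; subst.
    + apply ls_level; auto.
      * apply (lvl_str_level (App M' N')); auto. apply ls_app; auto.
      * eapply le_trans; [| eauto]. apply le_app; apply lvl_str_sound; auto.
    + apply ls_app; auto.
  - inversion HP; subst; [match goal with H : is_level (Lam _ _ _) |- _ => inversion H end |].
    apply ls_lam; auto.
  - inversion HP; subst; [match goal with H : is_level (Pi _ _ _) |- _ => inversion H end |].
    apply ls_pi; auto.
Qed.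

Lemma lvl_eq_str M N : lvl_eq M N -> lvl_str M N.
Proof.
  induction 1.
  1-6: apply ls_level; auto; repeat constructor; auto.
  - apply lvl_str_refl.
  - apply lvl_str_sym; auto.
  - eapply lvl_str_trans; eauto.
  - apply ls_app; auto.
  - apply ls_lam; auto.
  - apply ls_pi; auto.
Qed.

Section Commutation.

Variable sig : signature.

Lemma level_normal l X : is_level l -> ~ red1 sig l X.
Proof.
  intros Hl; revert X; induction Hl; intros X HX; unfold tz, ts, tmax in *.
  - inversion HX.
  - inversion HX.
  - inversion HX as [| | | | |? ? ? Hc|? ? ? Hr| | | |]; subst;
      [inversion Hc | eapply IHHl; eauto].
  - inversion HX as [| | | | |? ? ? Hc|? ? ? Hr| | | |]; subst; [| eapply IHHl2; eauto].
    inversion Hc as [| | | | |? ? ? Hc'|? ? ? Hr'| | | |]; subst;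
      [inversion Hc' | eapply IHHl1; eauto].
Qed.

Ltac level_of_str :=
  match goal with
  | |- is_level ?M => match goal with H : lvl_str M ?X |- _ =>
      apply (lvl_str_level X); [| exact H]; auto end
  end.

Lemma lvl_str_El_u_commute M l' l : is_level l' -> is_level l ->
  lvl_str M (tEl l' (tu l)) -> exists M', red1 sig M M' /\ lvl_eq M' (tU l).
Proof.
  intros Hl' Hl HM; unfold tEl, tu in HM.
  apply lvl_str_app_inv in HM as [X [Y [-> [HX HY]]]]; [| not_level].
  apply lvl_str_app_inv in HX as [X0 [Z [-> [HX0 HZ]]]]; [| not_level].
  apply lvl_str_const_inv in HX0; [subst X0 | not_level].
  apply lvl_str_app_inv in HY as [X' [W [-> [HX' HW]]]]; [| not_level].
  apply lvl_str_const_inv in HX'; [subst X' | not_level].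
  exists (tU W); split; [apply r_El_u; level_of_str |].
  apply le_app; [apply le_refl | apply lvl_str_sound; auto].
Qed.

Lemma lvl_str_El_pi_commute M l' lA lB A B : is_level l' -> is_level lA -> is_level lB ->
  lvl_str M (tEl l' (tpi lA lB A B)) -> exists M', red1 sig M M' /\
    lvl_eq M' (Pi Ord (tEl lA A) (tEl (lift Ord 0 lB) (App (lift Ord 0 B) (Var 0)))).
Proof.
  intros Hl' HlA HlB HM; unfold tEl, tpi in HM.
  apply lvl_str_app_inv in HM as [X [Y [-> [HX HY]]]]; [| not_level].
  apply lvl_str_app_inv in HX as [X0 [Z [-> [HX0 HZ]]]]; [| not_level].
  apply lvl_str_const_inv in HX0; [subst X0 | not_level].
  apply lvl_str_app_inv in HY as [X1 [B1 [-> [HX1 HB1]]]]; [| not_level].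
  apply lvl_str_app_inv in HX1 as [X2 [A1 [-> [HX2 HA1]]]]; [| not_level].
  apply lvl_str_app_inv in HX2 as [X3 [mB [-> [HX3 HmB]]]]; [| not_level].
  apply lvl_str_app_inv in HX3 as [X4 [mA [-> [HX4 HmA]]]]; [| not_level].
  apply lvl_str_const_inv in HX4; [subst X4 | not_level].
  exists (Pi Ord (tEl mA A1) (tEl (lift Ord 0 mB) (App (lift Ord 0 B1) (Var 0)))).
  split; [apply r_El_pi; level_of_str |].
  unfold tEl; repeat first [ apply le_refl | apply le_app | apply le_pi | apply lvl_eq_lift
                           | apply lvl_str_sound; assumption ].
Qed.

Lemma lvl_str_red1_commute M N : lvl_str M N -> forall N', red1 sig N N' ->
  exists M', red1 sig M M' /\ lvl_eq M' N'.
Proof.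
  induction 1 as [M N HM HN HMN| | |M M' N N' HMM' IH1 HNN' IH2|k A A' M M' HAA' IH1 HMM' IH2
    |k A A' B B' HAA' IH1 HBB' IH2| |]; intros N2 HR.
  - exfalso; eapply level_normal; eauto.
  - inversion HR.
  - exists N2; split; [exact HR | apply le_refl].
  - inversion HR; subst.
    + apply lvl_str_lam_inv in HMM' as [A1 [P1 [-> [HA HP]]]].
      eexists; split; [apply r_beta_ord |].
      apply lvl_eq_subst; try apply lvl_str_sound; auto. discriminate.
    + apply lvl_str_lam_inv in HMM' as [A1 [P1 [-> [HA HP]]]].
      assert (is_level N) by level_of_str.
      eexists; split; [apply r_beta_lev; auto |].
      apply lvl_eq_subst; try apply lvl_str_sound; auto.
    + eapply lvl_str_El_u_commute; [| | apply ls_app; eassumption]; assumption.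
    + eapply lvl_str_El_pi_commute; [| | | apply ls_app; eassumption]; assumption.
    + edestruct IH1 as [M1 [HR1 HE1]]; [eassumption |].
      exists (App M1 N); split; [apply r_appl; auto | apply le_app; auto using lvl_str_sound].
    + edestruct IH2 as [N1 [HR1 HE1]]; [eassumption |].
      exists (App M N1); split; [apply r_appr; auto | apply le_app; auto using lvl_str_sound].
  - inversion HR; subst.
    + edestruct IH1 as [A2 [HR1 HE1]]; [eassumption |].
      exists (Lam k A2 M); split; [apply r_lam_ty; auto | apply le_lam; auto using lvl_str_sound].
    + edestruct IH2 as [M2 [HR1 HE1]]; [eassumption |].
      exists (Lam k A M2); split; [apply r_lam_bd; auto | apply le_lam; auto using lvl_str_sound].
  - inversion HR; subst.
    + edestruct IH1 as [A2 [HR1 HE1]]; [eassumption |].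
      exists (Pi k A2 B); split; [apply r_pi_ty; auto | apply le_pi; auto using lvl_str_sound].
    + edestruct IH2 as [B2 [HR1 HE1]]; [eassumption |].
      exists (Pi k A B2); split; [apply r_pi_bd; auto | apply le_pi; auto using lvl_str_sound].
  - inversion HR.
  - inversion HR.
Qed.

End Commutation.

Lemma lvl_eq_red1_commute sig M N N' : lvl_eq M N -> red1 sig N N' ->
  exists M', red1 sig M M' /\ lvl_eq M' N'.
Proof. intros HMN; apply lvl_str_red1_commute, lvl_eq_str, HMN. Qed.

Lemma lvl_eq_red_star_commute sig N N' : red_star sig N N' -> forall M, lvl_eq M N ->
  exists M', red_star sig M M' /\ lvl_eq M' N'.
Proof.
  induction 1 as [N N' HR | N | N N1 N' _ IH1 _ IH2]; intros M HMN.
  - destruct (lvl_eq_red1_commute sig M N N' HMN HR) as [M' [HM' HE]].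
    exists M'; split; [apply rt_step |]; auto.
  - exists M; split; [apply rt_refl | exact HMN].
  - destruct (IH1 M HMN) as [M1 [HM1 HE1]].
    destruct (IH2 M1 HE1) as [M' [HM' HE']].
    exists M'; split; [eapply rt_trans |]; eauto.
Qed.

Lemma conv_red_star_join sig : confluent (red1 sig) ->
  forall M N, conv sig M N ->
  exists M' N', red_star sig M M' /\ red_star sig N N' /\ lvl_eq M' N'.
Proof.
  intros Hconf M N H; induction H as [M N [HR | HE] | M | M N _ IH | M N P _ IH1 _ IH2].
  - exists N, N; repeat split; [apply rt_step; auto | apply rt_refl | apply le_refl].
  - exists M, N; repeat split; [apply rt_refl | apply rt_refl | exact HE].
  - exists M, M; repeat split; [apply rt_refl | apply rt_refl | apply le_refl].
  - destruct IH as [M' [N' [HM [HN HE]]]].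
    exists N', M'; repeat split; auto using le_sym.
  - destruct IH1 as [M1 [N1 [HM [HN1 HE1]]]].
    destruct IH2 as [N2 [P1 [HN2 [HP HE2]]]].
    destruct (Hconf N N1 N2 HN1 HN2) as [Q [HN1Q HN2Q]].
    destruct (lvl_eq_red_star_commute sig N1 Q HN1Q M1 HE1) as [M' [HM' HEM]].
    destruct (lvl_eq_red_star_commute sig N2 Q HN2Q P1 (le_sym _ _ HE2)) as [P' [HP' HEP]].
    exists M', P'; repeat split; [eapply rt_trans; eauto | eapply rt_trans; eauto |].
    eapply le_trans; [exact HEM | apply le_sym; exact HEP].
Qed.

Theorem mainTheorem3 (sig : signature)
  (sig_finite : exists b, forall n, b <= n -> sig n = None)
  (sig_closed : forall n A M, sig n = Some (A, M) -> closed M) :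
  confluent (red1 sig) /\
  (forall M N N', lvl_eq M N -> red1 sig N N' ->
     exists M', red1 sig M M' /\ lvl_eq M' N') /\
  (forall M N, conv sig M N ->
     exists M' N', red_star sig M M' /\ red_star sig N N' /\ lvl_eq M' N').
Proof.
  pose proof (red1_confluent sig sig_closed) as Hconf.
  split; [exact Hconf | split].
  - exact (lvl_eq_red1_commute sig).
  - exact (conv_red_star_join sig Hconf).
Qed.
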